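(* Let $r=\langle L\leftarrow K\rightarrow R\rangle$ be a rule over $\mathcal L$ and let $g:L\to G$ be an injective graph morphism. Then there exist graphs $D,H$ and morphisms $K\to D$, $D\to G$, $R\to H$, $D\to H$ such that both squares of the diagram $$\begin{array}{ccccc} L & \leftarrow & K & \rightarrow & R\\ \downarrow g & & \downarrow & & \downarrow\\ G & \leftarrow & D & \rightarrow & H\end{array}$$ commute and are natural pushouts (a natural double pushout) if and only if $g$ satisfies the dangling condition. In this case $D$ and $H$ are unique up to isomorphism, and for a TLRG $G$ they coincide (up to isomorphism) with the intermediate graph and result graph of the rule application construction. Moreover, if $G\Rightarrow_r H$, then $G$ is a TLRG if and only if $H$ is a TLRG.
   Context: Fix a label alphabet $\mathcal L=(\mathcal L_V,\mathcal L_E)$ of finite sets. A graph over $\mathcal L$ is a tuple $G=(V,E,s,t,l,m,p)$ where $V,E$ are finite sets, $s,t:E\to V$ are total (source and target), $l:V\rightharpoonup\mathcal L_V$ is a partial node labelling, $m:E\to\mathcal L_E$ is a total edge labelling, and $p:V\rightharpoonup\{0,1\}$ is a partial rootedness function ($1$ = root, $0$ = non-root). $G$ is a TLRG (totally labelled, totally rooted graph) if $l$ and $p$ are total. A morphism $g:G\to H$ is a pair $(g_V:V_G\to V_H,g_E:E_G\to E_H)$ with $g_V\circ s_G=s_H\circ g_E$, $g_V\circ t_G=t_H\circ g_E$, $m_H\circ g_E=m_G$, $l_H(g_V(v))=l_G(v)$ whenever $l_G(v)$ is defined, and $p_H(g_V(v))=p_G(v)$ whenever $p_G(v)$ is defined.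 Graphs and morphisms form a category; pushouts and pullbacks are taken there, and a natural pushout is a commuting square that is both a pushout and a pullback. A morphism is injective if both components are injective; an isomorphism is a bijective morphism whose inverse is a morphism. A rule $r=\langle L\leftarrow K\rightarrow R\rangle$ consists of TLRGs $L,R$ and a graph $K$ that is a subgraph of both $L$ and $R$ (i.e. $V_K\subseteq V_L$, $E_K\subseteq E_L$, $s_K,t_K,m_K$ are restrictions of $s_L,t_L,m_L$, and $l_K\subseteq l_L$, $p_K\subseteq p_L$ as sets of pairs; likewise for $R$), the two arrows being the inclusions. An injective morphism $g:L\to G$ satisfies the dangling condition if no edge of $G$ not in $g(L)$ is incident to a node in $g(V_L\setminus V_K)$. Applying $r$ to a TLRG $G$ via such $g$: (1) delete from $G$ the images of the nodes and edges of $L$ not in $K$, and for each node $v$ of $K$ whose label (resp. rootedness) is undefined, make the label (resp. rootedness) of $g_V(v)$ undefined, giving the intermediate graph $D$; (2) add disjointly the nodes and edges of $R$ not in $K$ with their labels and rootedness (edges attached via $g$ on nodes of $K$), and for each node $v$ of $K$ with undefined label (resp. rootedness), set the label (resp. rootedness) of $g_V(v)$ to $l_R(v)$ (resp. $p_R(v)$), giving the result graph $H$. One writes $G\Rightarrow_{r,g}M$ or $G\Rightarrow_r M$ if $M\cong H$ for such a match $g$ satisfying the dangling condition. *)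

From HB Require Import structures.
From mathcomp Require Import all_boot.
Set Implicit Arguments. Unset Strict Implicit. Unset Printing Implicit Defensive.

Section Graphs.
Variables (LV LE : finType).

Record graph := Graph {
  gnode : finType;
  gedge : finType;
  gsrc : gedge -> gnode;
  gtgt : gedge -> gnode;
  glab : gnode -> option LV;
  gmark : gedge -> LE;
  groot : gnode -> option bool }.

Definition TLRG (G : graph) :=
  forall v : gnode G, glab v <> None /\ groot v <> None.

Record morph (G H : graph) := Morph {
  mV : gnode G -> gnode H;
  mE : gedge G -> gedge H;
  morph_src : forall e, mV (gsrc e) = gsrc (mE e);
  morph_tgt : forall e, mV (gtgt e) = gtgt (mE e);
  morph_mark : forall e, gmark (mE e) = gmark e;
  morph_lab : forall v a, glab v = Some a -> glab (mV v) = Some a;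
  morph_root : forall v b, groot v = Some b -> groot (mV v) = Some b }.

Definition inj_morph G H (f : morph G H) := injective (mV f) /\ injective (mE f).

Definition tri X Y Z (u : morph Y Z) (f : morph X Y) (x : morph X Z) :=
  (forall v, mV u (mV f v) = mV x v) /\ (forall e, mE u (mE f e) = mE x e).

Definition meq X Y (u u' : morph X Y) :=
  (forall v, mV u v = mV u' v) /\ (forall e, mE u e = mE u' e).

Definition sq_comm A B C D (b : morph A B) (c : morph A C)
  (f : morph B D) (h : morph C D) :=
  (forall v, mV f (mV b v) = mV h (mV c v)) /\
  (forall e, mE f (mE b e) = mE h (mE c e)).

Definition is_pushout A B C D (b : morph A B) (c : morph A C)
  (f : morph B D) (h : morph C D) :=
  sq_comm b c f h /\
  forall (X : graph) (x1 : morph B X) (x2 : morph C X), sq_comm b c x1 x2 ->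
    exists u : morph D X, (tri u f x1 /\ tri u h x2) /\
      forall u' : morph D X, tri u' f x1 -> tri u' h x2 -> meq u u'.

Definition is_pullback A B C D (b : morph A B) (c : morph A C)
  (f : morph B D) (h : morph C D) :=
  sq_comm b c f h /\
  forall (X : graph) (y1 : morph X B) (y2 : morph X C), sq_comm y1 y2 f h ->
    exists u : morph X A, (tri b u y1 /\ tri c u y2) /\
      forall u' : morph X A, tri b u' y1 -> tri c u' y2 -> meq u u'.

Definition is_natural_pushout A B C D (b : morph A B) (c : morph A C)
  (f : morph B D) (h : morph C D) :=
  is_pushout b c f h /\ is_pullback b c f h.

Definition iso (G H : graph) :=
  exists (f : morph G H) (f' : morph H G),
    cancel (mV f) (mV f') /\ cancel (mV f') (mV f) /\
    cancel (mE f) (mE f') /\ cancel (mE f') (mE f).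

(* A rule <L <- K -> R>: L, R TLRGs, K a subgraph of both; the inclusions are
   represented by injective morphisms b1 : K -> L, b2 : K -> R. *)
Definition is_rule K L R (b1 : morph K L) (b2 : morph K R) :=
  TLRG L /\ TLRG R /\ inj_morph b1 /\ inj_morph b2.

Definition dangling K L G (b1 : morph K L) (g : morph L G) :=
  forall e : gedge G, e \notin codom (mE g) ->
    forall x : gnode L, x \notin codom (mV b1) ->
      gsrc e <> mV g x /\ gtgt e <> mV g x.

Definition natural_dpo K L R G D H (b1 : morph K L) (b2 : morph K R)
  (g : morph L G) (k : morph K D) (d : morph D G) (h : morph R H)
  (d' : morph D H) :=
  is_natural_pushout b1 k g d /\ is_natural_pushout b2 k h d'.

Section Construction.
Variables (K L R G : graph) (b1 : morph K L) (b2 : morph K R) (g : morph L G).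

Definition delV (v : gnode G) : bool :=
  [exists x : gnode L, (x \notin codom (mV b1)) && (mV g x == v)].
Definition delE (e : gedge G) : bool :=
  [exists y : gedge L, (y \notin codom (mE b1)) && (mE g y == e)].
(* under the dangling condition the last two conjuncts are implied by the first *)
Definition keepE (e : gedge G) : bool :=
  [&& ~~ delE e, ~~ delV (gsrc e) & ~~ delV (gtgt e)].

Definition VD := {v : gnode G | ~~ delV v}.
Definition ED := {e : gedge G | keepE e}.

Lemma keepE_src e : keepE e -> ~~ delV (gsrc e). Proof. by case/and3P. Qed.
Lemma keepE_tgt e : keepE e -> ~~ delV (gtgt e). Proof. by case/and3P. Qed.

Definition srcD (e : ED) : VD := exist _ (gsrc (val e)) (keepE_src (valP e)).
Definition tgtD (e : ED) : VD := exist _ (gtgt (val e)) (keepE_tgt (valP e)).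
Definition labD (v : VD) : option LV :=
  if [exists k : gnode K, (mV g (mV b1 k) == val v) && (glab k == None)]
  then None else glab (val v).
Definition rootD (v : VD) : option bool :=
  if [exists k : gnode K, (mV g (mV b1 k) == val v) && (groot k == None)]
  then None else groot (val v).
Definition markD (e : ED) : LE := gmark (val e).

Definition interm : graph := @Graph VD ED srcD tgtD labD markD rootD.

Definition VRn := {x : gnode R | x \notin codom (mV b2)}.
Definition ERn := {y : gedge R | y \notin codom (mE b2)}.
Definition VH := (VD + VRn)%type.
Definition EH := (ED + ERn)%type.

Lemma keep_K (ginj : injective (mV g)) k : ~~ delV (mV g (mV b1 k)).
Proof.
apply/existsP => -[x /andP [Hx /eqP Hg]].
by move: Hx; rewrite (ginj _ _ Hg) codom_f.
Qed.

Variable ginj : injective (mV g).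

Definition kD (k : gnode K) : VD := exist _ (mV g (mV b1 k)) (keep_K ginj k).

Definition hR (x : gnode R) : VH :=
  (if x \in codom (mV b2) as c return (x \in codom (mV b2) = c -> VH)
   then fun h => inl (kD (iinv h))
   else fun h => inr (exist _ x (negbT h))) (erefl _).

Definition srcH (e : EH) : VH :=
  match e with inl e => inl (srcD e) | inr y => hR (gsrc (val y)) end.
Definition tgtH (e : EH) : VH :=
  match e with inl e => inl (tgtD e) | inr y => hR (gtgt (val y)) end.
Definition labH (v : VH) : option LV :=
  match v with
  | inl v => if [pick k | (mV g (mV b1 k) == val v) && (glab k == None)] is Some k
             then glab (mV b2 k) else labD v
  | inr x => glab (val x)
  end.
Definition rootH (v : VH) : option bool :=
  match v with
  | inl v => if [pick k | (mV g (mV b1 k) == val v) && (groot k == None)] is Some k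
             then groot (mV b2 k) else rootD v
  | inr x => groot (val x)
  end.
Definition markH (e : EH) : LE :=
  match e with inl e => markD e | inr y => gmark (val y) end.

Definition result : graph := @Graph VH EH srcH tgtH labH markH rootH.

End Construction.
End Graphs.

From HB Require Import structures.
From mathcomp Require Import all_boot.
Set Implicit Arguments. Unset Strict Implicit. Unset Printing Implicit Defensive.

(* A pushout along an injective morphism behaves like a pushout of sets: the
   opposite morphism is injective, the square is a pullback on nodes and edges,
   the two legs jointly cover the target, and labels off the interface are
   preserved; all of this follows by comparing the pushout with the explicit
   set-level gluing. In a natural DPO these facts give the dangling condition
   and make the evident maps from the intermediate and result graphs of the
   rule application into D and H bijective and label-preserving, hence
   isomorphisms. Conversely, under the dangling condition those two graphs with
   the evident morphisms form a natural DPO. Finally H is a TLRG iff G is,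
   because the nodes whose label or rootedness the rule undefines are
   relabelled from the totally labelled R. *)

Section CodomCase.
Variables (T : finType) (T' : eqType) (f : T -> T') (Y : Type).

Definition codom_case (y : T') (inside : T -> Y) (outside : y \notin codom f -> Y) : Y :=
  (if y \in codom f as c return (y \in codom f = c -> Y)
   then fun fy => inside (iinv fy) else fun nfy => outside (negbT nfy)) (erefl _).
Arguments codom_case : clear implicits.

Lemma codom_case_f (finj : injective f) x inside outside :
  codom_case (f x) inside outside = inside x.
Proof.
rewrite /codom_case; move: (erefl _); case: {2 3}(f x \in codom f) => fx.
- by congr inside; apply: finj; rewrite f_iinv.
- by exfalso; rewrite codom_f in fx.
Qed.

Lemma codom_case_out y inside outside (ny : y \notin codom f) :
  codom_case y inside outside = outside ny.
Proof.
rewrite /codom_case; move: (erefl _); case: {2 3}(y \in codom f) => fy.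
- by exfalso; rewrite fy in ny.
- by congr outside; apply: bool_irrelevance.
Qed.

End CodomCase.
Arguments codom_case {T T'} f {Y} y inside outside.
Arguments codom_case_f {T T' f Y} finj x inside outside.
Arguments codom_case_out {T T' f Y} y inside outside ny.

Section Morphisms.
Variables (LV LE : finType).
Local Notation graph := (graph LV LE).

Definition id_morph (A : graph) : morph A A :=
  @Morph _ _ A A id id (fun _ => erefl) (fun _ => erefl) (fun _ => erefl)
    (fun _ _ => id) (fun _ _ => id).

Definition comp_morph (A B C : graph) (v : morph B C) (u : morph A B) : morph A C.
Proof.
refine (@Morph _ _ A C (mV v \o mV u) (mE v \o mE u) _ _ _ _ _) => /=.
- by move=> e; rewrite !morph_src.
- by move=> e; rewrite !morph_tgt.
- by move=> e; rewrite !morph_mark.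
- by move=> x a /(morph_lab u) /(morph_lab v).
- by move=> x a /(morph_root u) /(morph_root v).
Defined.

Lemma iso_sym (A B : graph) : iso A B -> iso B A.
Proof. by case=> f [f' [fK [f'K [fEK f'EK]]]]; exists f', f. Qed.

Lemma iso_trans (A B C : graph) : iso A B -> iso B C -> iso A C.
Proof.
case=> f [f' [fK [f'K [fEK f'EK]]]] [u [u' [uK [u'K [uEK u'EK]]]]].
exists (comp_morph u f), (comp_morph f' u'); do !split; move=> x /=.
- by rewrite uK fK.
- by rewrite f'K u'K.
- by rewrite uEK fEK.
- by rewrite f'EK u'EK.
Qed.

Lemma iso_TLRG (A B : graph) : iso A B -> TLRG A -> TLRG B.
Proof.
case=> f [f' [_ [f'K _]]] TA z; have [la ra] := TA (mV f' z).
split.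
- by case E: (glab (mV f' z)) la => [a|] // _; rewrite -(f'K z) (morph_lab f E).
- by case E: (groot (mV f' z)) ra => [a|] // _; rewrite -(f'K z) (morph_root f E).
Qed.

Section BijectiveMorphism.
Variables (A B : graph) (f : morph A B).
Hypotheses (fV : injective (mV f)) (fE : injective (mE f)).
Hypotheses (fV_onto : forall y, y \in codom (mV f)) (fE_onto : forall y, y \in codom (mE f)).
Hypotheses (f_lab : forall x, glab (mV f x) = glab x)
  (f_root : forall x, groot (mV f x) = groot x).

Let invV y := iinv (fV_onto y).
Let invE y := iinv (fE_onto y).
Let invVK : cancel invV (mV f). Proof. by move=> y; rewrite /invV f_iinv. Qed.
Let invEK : cancel invE (mE f). Proof. by move=> y; rewrite /invE f_iinv. Qed.

Definition inv_morph : morph B A.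
Proof.
refine (@Morph _ _ B A invV invE _ _ _ _ _).
- by move=> e; apply: fV; rewrite morph_src !invVK invEK.
- by move=> e; apply: fV; rewrite morph_tgt !invVK invEK.
- by move=> e; rewrite -{2}(invEK e) morph_mark.
- by move=> y a; rewrite -f_lab invVK.
- by move=> y a; rewrite -f_root invVK.
Defined.

Lemma bij_morph_iso : iso A B.
Proof.
exists f, inv_morph; do !split => /=.
- by move=> x; rewrite /invV iinv_f.
- exact: invVK.
- by move=> x; rewrite /invE iinv_f.
- exact: invEK.
Qed.

End BijectiveMorphism.
End Morphisms.

Section PushoutAlongInjective.
Variables (LV LE : finType).
Local Notation graph := (graph LV LE).
Variables (A B C D : graph) (b : morph A B) (c : morph A C) (f : morph B D) (h : morph C D).
Hypotheses (bV : injective (mV b)) (bE : injective (mE b)).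
Hypothesis PO : is_pushout b c f h.

(* [glue] is the pushout of the node and edge sets (C + B, where [glueV] sends
   b(A) into C), with the labels of D on c(A) so that [glue_B] and [glue_C]
   are morphisms.  The mediating morphism D -> glue is a section of [unglue];
   everything below is read off from this section. *)
Definition glueV (y : gnode B) : gnode C + gnode B :=
  codom_case (mV b) y (fun a => inl (mV c a)) (fun _ => inr y).
Definition glueE (y : gedge B) : gedge C + gedge B :=
  codom_case (mE b) y (fun a => inl (mE c a)) (fun _ => inr y).

Lemma glueV_b a : glueV (mV b a) = inl (mV c a). Proof. exact: codom_case_f. Qed.
Lemma glueE_b a : glueE (mE b a) = inl (mE c a). Proof. exact: codom_case_f. Qed.
Lemma glueV_out y : y \notin codom (mV b) -> glueV y = inr y.
Proof. exact: codom_case_out. Qed.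
Lemma glueE_out y : y \notin codom (mE b) -> glueE y = inr y.
Proof. exact: codom_case_out. Qed.

Lemma glueV_inl y u : glueV y = inl u -> exists2 a, mV b a = y & mV c a = u.
Proof.
case: (boolP (y \in codom (mV b))) => [/codomP [a ->]|/glueV_out -> //].
by rewrite glueV_b => -[<-]; exists a.
Qed.
Lemma glueE_inl y u : glueE y = inl u -> exists2 a, mE b a = y & mE c a = u.
Proof.
case: (boolP (y \in codom (mE b))) => [/codomP [a ->]|/glueE_out -> //].
by rewrite glueE_b => -[<-]; exists a.
Qed.

Definition glue_src (e : gedge C + gedge B) :=
  match e with inl e => inl (gsrc e) | inr e => glueV (gsrc e) end.
Definition glue_tgt (e : gedge C + gedge B) :=
  match e with inl e => inl (gtgt e) | inr e => glueV (gtgt e) end.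
Definition glue_lab (v : gnode C + gnode B) :=
  match v with
  | inl u => if u \in codom (mV c) then glab (mV h u) else glab u
  | inr y => glab y end.
Definition glue_root (v : gnode C + gnode B) :=
  match v with
  | inl u => if u \in codom (mV c) then groot (mV h u) else groot u
  | inr y => groot y end.
Definition glue_mark (e : gedge C + gedge B) :=
  match e with inl e => gmark e | inr e => gmark e end.

Definition glue : graph := Graph glue_src glue_tgt glue_lab glue_mark glue_root.

Definition glue_B : morph B glue.
Proof.
refine (@Morph _ _ B glue glueV glueE _ _ _ _ _).
- move=> e; case: (boolP (e \in codom (mE b))) => [/codomP [a ->]|/glueE_out -> //].
  by rewrite glueE_b /= -!morph_src glueV_b.
- move=> e; case: (boolP (e \in codom (mE b))) => [/codomP [a ->]|/glueE_out -> //].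
  by rewrite glueE_b /= -!morph_tgt glueV_b.
- move=> e; case: (boolP (e \in codom (mE b))) => [/codomP [a ->]|/glueE_out -> //].
  by rewrite glueE_b /= !morph_mark.
- move=> y z Ly; case: (boolP (y \in codom (mV b))) => [/codomP [a Ea]|/glueV_out -> //].
  rewrite Ea glueV_b /= codom_f -(proj1 (proj1 PO)) -Ea; exact: morph_lab.
- move=> y z Ry; case: (boolP (y \in codom (mV b))) => [/codomP [a Ea]|/glueV_out -> //].
  rewrite Ea glueV_b /= codom_f -(proj1 (proj1 PO)) -Ea; exact: morph_root.
Defined.

Definition glue_C : morph C glue.
Proof.
refine (@Morph _ _ C glue inl inl _ _ _ _ _) => // u z /=; case: ifP => // _.
- exact: morph_lab.
- exact: morph_root.
Defined.

Definition unglueV (x : gnode C + gnode B) :=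
  match x with inl u => mV h u | inr y => mV f y end.
Definition unglueE (x : gedge C + gedge B) :=
  match x with inl u => mE h u | inr y => mE f y end.

Lemma unglueV_glue y : unglueV (glueV y) = mV f y.
Proof.
case: (boolP (y \in codom (mV b))) => [/codomP [a ->]|/glueV_out -> //].
by rewrite glueV_b /= (proj1 (proj1 PO)).
Qed.
Lemma unglueE_glue y : unglueE (glueE y) = mE f y.
Proof.
case: (boolP (y \in codom (mE b))) => [/codomP [a ->]|/glueE_out -> //].
by rewrite glueE_b /= (proj2 (proj1 PO)).
Qed.

Definition unglue : morph glue D.
Proof.
refine (@Morph _ _ glue D unglueV unglueE _ _ _ _ _).
- by case=> e /=; rewrite ?unglueV_glue morph_src.
- by case=> e /=; rewrite ?unglueV_glue morph_tgt.
- by case=> e /=; rewrite morph_mark.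
- case=> [u|y] z /=; last exact: morph_lab.
  by case: ifP => // _; apply: morph_lab.
- case=> [u|y] z /=; last exact: morph_root.
  by case: ifP => // _; apply: morph_root.
Defined.

Lemma glue_sq_comm : sq_comm b c glue_B glue_C.
Proof. by split => a /=; rewrite ?glueV_b ?glueE_b. Qed.

Lemma pushout_glue_section : exists m : morph D glue,
  [/\ tri m f glue_B, tri m h glue_C, cancel (mV m) unglueV & cancel (mE m) unglueE].
Proof.
have [m [[mf mh] _]] := proj2 PO _ _ _ glue_sq_comm.
have [u0 [_ uniq]] := proj2 PO _ _ _ (proj1 PO).
have umf : tri (comp_morph unglue m) f f.
  by split=> y /=; [rewrite (proj1 mf) unglueV_glue | rewrite (proj2 mf) unglueE_glue].
have umh : tri (comp_morph unglue m) h h by split=> y /=; rewrite ?(proj1 mh) ?(proj2 mh).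
have [uV uE] := uniq _ umf umh.
have [iV iE] := uniq (id_morph D) (conj (fun _ => erefl) (fun _ => erefl))
  (conj (fun _ => erefl) (fun _ => erefl)).
by exists m; split=> // w; [rewrite -[RHS]iV | rewrite -[RHS]iE]; rewrite /= ?uV ?uE.
Qed.

Lemma pushout_injV : injective (mV h).
Proof.
have [m [_ [mh _] _ _]] := pushout_glue_section => u1 u2 E.
by have := mh u1; rewrite E mh => -[].
Qed.
Lemma pushout_injE : injective (mE h).
Proof.
have [m [_ [_ mh] _ _]] := pushout_glue_section => u1 u2 E.
by have := mh u1; rewrite E mh => -[].
Qed.

Lemma pushout_pullbackV y u :
  mV f y = mV h u -> exists2 a, mV b a = y & mV c a = u.
Proof.
have [m [[mf _] [mh _] _ _]] := pushout_glue_section => E.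
by apply: glueV_inl; rewrite -[glueV y]/(mV glue_B y) -mf E mh.
Qed.
Lemma pushout_pullbackE y u :
  mE f y = mE h u -> exists2 a, mE b a = y & mE c a = u.
Proof.
have [m [[_ mf] [_ mh] _ _]] := pushout_glue_section => E.
by apply: glueE_inl; rewrite -[glueE y]/(mE glue_B y) -mf E mh.
Qed.

Lemma pushout_coverV w : (exists y, mV f y = w) \/ (exists u, mV h u = w).
Proof.
have [m [_ _ mK _]] := pushout_glue_section.
by have := mK w; case: (mV m w) => [u|y] /= <-; [right|left]; eexists.
Qed.
Lemma pushout_coverE w : (exists y, mE f y = w) \/ (exists u, mE h u = w).
Proof.
have [m [_ _ _ mK]] := pushout_glue_section.
by have := mK w; case: (mE m w) => [u|y] /= <-; [right|left]; eexists.
Qed.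

Lemma pushout_lab_out u : u \notin codom (mV c) -> glab (mV h u) = glab u.
Proof.
have [m [_ [mh _] _ _]] := pushout_glue_section => nu.
case Lu: (glab u) => [z|]; first exact: morph_lab.
case Lhu: (glab (mV h u)) => [z|] //.
by have := morph_lab m Lhu; rewrite mh /= (negbTE nu) Lu.
Qed.
Lemma pushout_root_out u : u \notin codom (mV c) -> groot (mV h u) = groot u.
Proof.
have [m [_ [mh _] _ _]] := pushout_glue_section => nu.
case Ru: (groot u) => [z|]; first exact: morph_root.
case Rhu: (groot (mV h u)) => [z|] //.
by have := morph_root m Rhu; rewrite mh /= (negbTE nu) Ru.
Qed.

Lemma pushout_injV_l : injective (mV c) -> injective (mV f).
Proof.
have [m [[mf _] _ _ _]] := pushout_glue_section => cV y1 y2 E.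
have : glueV y1 = glueV y2 by rewrite -[glueV _]/(mV glue_B _) -!mf E.
case: (boolP (y1 \in codom (mV b))) => [/codomP [a1 ->]|/glueV_out ->];
case: (boolP (y2 \in codom (mV b))) => [/codomP [a2 ->]|/glueV_out ->];
by rewrite ?glueV_b // => -[] // /cV ->.
Qed.
Lemma pushout_injE_l : injective (mE c) -> injective (mE f).
Proof.
have [m [[_ mf] _ _ _]] := pushout_glue_section => cE y1 y2 E.
have : glueE y1 = glueE y2 by rewrite -[glueE _]/(mE glue_B _) -!mf E.
case: (boolP (y1 \in codom (mE b))) => [/codomP [a1 ->]|/glueE_out ->];
case: (boolP (y2 \in codom (mE b))) => [/codomP [a2 ->]|/glueE_out ->];
by rewrite ?glueE_b // => -[] // /cE ->.
Qed.

End PushoutAlongInjective.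

Section Pullbacks.
Variables (LV LE : finType).
Local Notation graph := (graph LV LE).

Definition point_graph (l : option LV) (r : option bool) : graph :=
  @Graph LV LE unit void (@of_void _) (@of_void _) (fun _ => l) (@of_void _) (fun _ => r).

Definition point_morph l r (Y : graph) (y : gnode Y)
  (yl : forall a, l = Some a -> glab y = Some a)
  (yr : forall a, r = Some a -> groot y = Some a) : morph (point_graph l r) Y :=
  @Morph _ _ (point_graph l r) Y (fun _ => y) (@of_void _) (fun e => match e with end)
    (fun e => match e with end) (fun e => match e with end) (fun _ => yl) (fun _ => yr).

Variables (A B C D : graph) (b : morph A B) (c : morph A C) (f : morph B D) (h : morph C D).

Section Attributes.
Hypothesis PB : is_pullback b c f h.
Hypothesis bV : injective (mV b).

(* Tested with a one-node graph carrying the common label; this is how the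
   pullback half of a natural DPO square stops the middle morphism from
   defining a label that the interface leaves undefined. *)
Lemma pullback_lab_c v : glab (mV b v) <> None -> glab (mV c v) = glab v.
Proof.
case Lbv: (glab (mV b v)) => [z|] // _.
case Lv: (glab v) => [z'|]; first exact: morph_lab.
case Lcv: (glab (mV c v)) => [z'|] //.
have /(morph_lab f) := Lbv; rewrite (proj1 (proj1 PB)) (morph_lab h Lcv) => -[Ez].
rewrite {}Ez in Lcv.
pose y1 := @point_morph (Some z) None B (mV b v)
  (fun a => etrans Lbv) (fun a (nS : None = Some a) => match nS with end).
pose y2 := @point_morph (Some z) None C (mV c v)
  (fun a => etrans Lcv) (fun a (nS : None = Some a) => match nS with end).
have sq : sq_comm y1 y2 f h by split=> // [[]]; exact: (proj1 (proj1 PB)).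
have [m [[[mb _] _] _]] := proj2 PB _ _ _ sq.
by have := morph_lab m (v := tt) erefl; rewrite (bV (mb tt)) Lv.
Qed.

Lemma pullback_root_c v : groot (mV b v) <> None -> groot (mV c v) = groot v.
Proof.
case Rbv: (groot (mV b v)) => [z|] // _.
case Rv: (groot v) => [z'|]; first exact: morph_root.
case Rcv: (groot (mV c v)) => [z'|] //.
have /(morph_root f) := Rbv; rewrite (proj1 (proj1 PB)) (morph_root h Rcv) => -[Ez].
rewrite {}Ez in Rcv.
pose y1 := @point_morph None (Some z) B (mV b v)
  (fun a (nS : None = Some a) => match nS with end) (fun a => etrans Rbv).
pose y2 := @point_morph None (Some z) C (mV c v)
  (fun a (nS : None = Some a) => match nS with end) (fun a => etrans Rcv).
have sq : sq_comm y1 y2 f h by split=> // [[]]; exact: (proj1 (proj1 PB)).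
have [m [[[mb _] _] _]] := proj2 PB _ _ _ sq.
by have := morph_root m (v := tt) erefl; rewrite (bV (mb tt)) Rv.
Qed.

End Attributes.

Lemma pullback_of_injective :
  injective (mV b) -> injective (mE b) -> injective (mV h) -> injective (mE h) ->
  sq_comm b c f h ->
  (forall X (y1 : morph X B) (y2 : morph X C), sq_comm y1 y2 f h ->
     exists u : morph X A, tri b u y1) ->
  is_pullback b c f h.
Proof.
move=> bV bE hV hE [sqV sqE] factor; split=> // X y1 y2 [ysqV ysqE].
have [u [ubV ubE]] := factor X y1 y2 (conj ysqV ysqE).
exists u; split.
- split; first by split.
  split=> z; [apply: hV | apply: hE].
  + by rewrite -sqV ubV ysqV.
  + by rewrite -sqE ubE ysqE.
- move=> u' [u'bV u'bE] _; split=> z.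
  + by apply: bV; rewrite ubV u'bV.
  + by apply: bE; rewrite ubE u'bE.
Qed.

End Pullbacks.

Section FactorThroughInjective.
Variables (LV LE : finType).
Variables (K L X : graph LV LE) (b : morph K L) (y : morph X L).
Hypothesis bV : injective (mV b).
Hypotheses (yV : forall z, mV y z \in codom (mV b)) (yE : forall z, mE y z \in codom (mE b)).

Definition factorV z := iinv (yV z).
Definition factorE z := iinv (yE z).

Lemma factorVK z : mV b (factorV z) = mV y z. Proof. exact: f_iinv. Qed.
Lemma factorEK z : mE b (factorE z) = mE y z. Proof. exact: f_iinv. Qed.

Hypotheses (factor_lab : forall z a, glab z = Some a -> glab (factorV z) = Some a)
  (factor_root : forall z a, groot z = Some a -> groot (factorV z) = Some a).

Definition factor_morph : morph X K.
Proof.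
refine (@Morph _ _ X K factorV factorE _ _ _ factor_lab factor_root).
- by move=> e; apply: bV; rewrite factorVK morph_src -factorEK morph_src.
- by move=> e; apply: bV; rewrite factorVK morph_tgt -factorEK morph_tgt.
- by move=> e; rewrite -(morph_mark b) factorEK morph_mark.
Defined.

Lemma factor_morphK : tri b factor_morph y.
Proof. by split=> z; rewrite /= ?factorVK ?factorEK. Qed.

End FactorThroughInjective.

Section RuleApplication.
Variables (LV LE : finType).
Local Notation graph := (graph LV LE).
Variables (K L R G : graph) (b1 : morph K L) (b2 : morph K R) (g : morph L G).
Hypotheses (TL : TLRG L) (TR : TLRG R).
Hypotheses (b1V : injective (mV b1)) (b1E : injective (mE b1))
  (b2V : injective (mV b2)) (b2E : injective (mE b2))
  (gV : injective (mV g)) (gE : injective (mE g)).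

Lemma existsK_at w a (P : pred (gnode K)) : mV g (mV b1 a) = w ->
  [exists k, (mV g (mV b1 k) == w) && P k] = P a.
Proof.
move=> <-; apply/existsP/idP => [[k /andP [/eqP /gV /b1V -> //]]|Pa].
by exists a; rewrite eqxx.
Qed.

Lemma existsK_off w (P : pred (gnode K)) : (forall a, mV g (mV b1 a) <> w) ->
  [exists k, (mV g (mV b1 k) == w) && P k] = false.
Proof. by move=> offw; apply/existsP => -[k /andP [/eqP /offw]]. Qed.

Lemma pickK_at w a (P : pred (gnode K)) : mV g (mV b1 a) = w ->
  [pick k | (mV g (mV b1 k) == w) && P k] = if P a then Some a else None.
Proof.
move=> Ew; case: pickP => [k /andP [/eqP Ek Pk]|none].
- by move: Ek Pk; rewrite -Ew => /gV /b1V -> ->.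
- by case: ifP => // Pa; have := none a; rewrite Ew eqxx Pa.
Qed.

Lemma pickK_off w (P : pred (gnode K)) : (forall a, mV g (mV b1 a) <> w) ->
  [pick k | (mV g (mV b1 k) == w) && P k] = None.
Proof. by move=> offw; case: pickP => // k /andP [/eqP /offw]. Qed.

Variant interm_node_spec (w : VD b1 g) : Prop :=
  | IntermK a of w = kD b1 gV a
  | IntermOffK of forall a, mV g (mV b1 a) <> val w.

Lemma interm_nodeP w : interm_node_spec w.
Proof.
case: (pickP (fun a => mV g (mV b1 a) == val w)) => [a /eqP Ea|offw].
  by apply: (IntermK (a := a)); apply: val_inj.
by apply: IntermOffK => a Ea; have := offw a; rewrite /= Ea eqxx.
Qed.

Lemma g_lab x : glab (mV g x) = glab x.
Proof. by case Lx: (glab x) (proj1 (TL x)) => [a|] // _; apply: morph_lab. Qed.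
Lemma g_root x : groot (mV g x) = groot x.
Proof. by case Rx: (groot x) (proj2 (TL x)) => [a|] // _; apply: morph_root. Qed.

Lemma labD_kD a : labD (kD b1 gV a) = glab a.
Proof.
rewrite /labD (existsK_at _ erefl) /=.
by case: eqP => [-> //|]; case La: (glab a) => // _; rewrite g_lab (morph_lab b1 La).
Qed.
Lemma rootD_kD a : rootD (kD b1 gV a) = groot a.
Proof.
rewrite /rootD (existsK_at _ erefl) /=.
by case: eqP => [-> //|]; case Ra: (groot a) => // _; rewrite g_root (morph_root b1 Ra).
Qed.

Lemma labD_off (w : VD b1 g) : (forall a, mV g (mV b1 a) <> val w) -> labD w = glab (val w).
Proof. by move=> offw; rewrite /labD existsK_off. Qed.
Lemma rootD_off (w : VD b1 g) : (forall a, mV g (mV b1 a) <> val w) -> rootD w = groot (val w).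
Proof. by move=> offw; rewrite /rootD existsK_off. Qed.

Lemma result_lab_kD a :
  glab (inl (kD b1 gV a) : gnode (result b1 b2 gV)) = glab (mV b2 a).
Proof.
rewrite /= (pickK_at _ erefl) /=; case: eqP => // La.
by rewrite labD_kD; case La': (glab a) La => [c|] // _; rewrite (morph_lab b2 La').
Qed.
Lemma result_root_kD a :
  groot (inl (kD b1 gV a) : gnode (result b1 b2 gV)) = groot (mV b2 a).
Proof.
rewrite /= (pickK_at _ erefl) /=; case: eqP => // Ra.
by rewrite rootD_kD; case Ra': (groot a) Ra => [c|] // _; rewrite (morph_root b2 Ra').
Qed.

Lemma result_lab_off (w : VD b1 g) : (forall a, mV g (mV b1 a) <> val w) ->
  glab (inl w : gnode (result b1 b2 gV)) = glab (val w).
Proof. by move=> offw; rewrite /= pickK_off // labD_off. Qed.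
Lemma result_root_off (w : VD b1 g) : (forall a, mV g (mV b1 a) <> val w) ->
  groot (inl w : gnode (result b1 b2 gV)) = groot (val w).
Proof. by move=> offw; rewrite /= pickK_off // rootD_off. Qed.

Lemma hR_b2 a : hR b1 b2 gV (mV b2 a) = inl (kD b1 gV a).
Proof.
exact (codom_case_f b2V a (fun a => inl (kD b1 gV a) : VH b1 b2 g)
  (fun na => inr (exist _ (mV b2 a) na))).
Qed.
Lemma hR_out x (nx : x \notin codom (mV b2)) :
  hR b1 b2 gV x = inr (exist _ x nx : VRn b2).
Proof.
exact (codom_case_out x (fun a => inl (kD b1 gV a) : VH b1 b2 g)
  (fun nx => inr (exist _ x nx)) nx).
Qed.

Section GivenDPO.
Variables (D H : graph) (k : morph K D) (d : morph D G) (h : morph R H) (d' : morph D H).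
Hypothesis dpo : natural_dpo b1 b2 g k d h d'.

Let POL : is_pushout b1 k g d := proj1 (proj1 dpo).
Let PBL : is_pullback b1 k g d := proj2 (proj1 dpo).
Let POR : is_pushout b2 k h d' := proj1 (proj2 dpo).
Let sqL v : mV g (mV b1 v) = mV d (mV k v) := proj1 (proj1 POL) v.
Let sqLE e : mE g (mE b1 e) = mE d (mE k e) := proj2 (proj1 POL) e.
Let sqR v : mV h (mV b2 v) = mV d' (mV k v) := proj1 (proj1 POR) v.
Let sqRE e : mE h (mE b2 e) = mE d' (mE k e) := proj2 (proj1 POR) e.

Let dV : injective (mV d) := pushout_injV b1V b1E POL.
Let dE : injective (mE d) := pushout_injE b1V b1E POL.
Let d'V : injective (mV d') := pushout_injV b2V b2E POR.
Let d'E : injective (mE d') := pushout_injE b2V b2E POR.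
Let kV : injective (mV k).
Proof. by move=> x y E; apply/b1V/gV; rewrite !sqL E. Qed.
Let kE : injective (mE k).
Proof. by move=> x y E; apply/b1E/gE; rewrite !sqLE E. Qed.
Let hV : injective (mV h) := pushout_injV_l b2V b2E POR kV.
Let hE : injective (mE h) := pushout_injE_l b2V b2E POR kE.

Lemma natural_dpo_dangling : dangling b1 g.
Proof.
move=> e ne x nx.
have [[y Ey]|[u <-]] := pushout_coverE b1V b1E POL e; first by rewrite -Ey codom_f in ne.
have not_deleted w : mV d w <> mV g x.
  by move=> /esym /(pushout_pullbackV b1V b1E POL) [a Ea _]; rewrite -Ea codom_f in nx.
by rewrite -morph_src -morph_tgt; split; apply: not_deleted.
Qed.

Lemma d_kept u : ~~ delV b1 g (mV d u).
Proof.
apply/existsP => -[x /andP [nx /eqP /(pushout_pullbackV b1V b1E POL) [a Ea _]]].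
by rewrite -Ea codom_f in nx.
Qed.

Lemma d_keptE e : keepE b1 g (mE d e).
Proof.
rewrite /keepE -morph_src -morph_tgt !d_kept !andbT.
apply/existsP => -[x /andP [nx /eqP /(pushout_pullbackE b1V b1E POL) [a Ea _]]].
by rewrite -Ea codom_f in nx.
Qed.

Lemma interm_in_codom_d (w : VD b1 g) : val w \in codom (mV d).
Proof.
have [[y Ey]|[u <-]] := pushout_coverV b1V b1E POL (val w); last exact: codom_f.
case: (boolP (y \in codom (mV b1))) => [/codomP [a Ea]|ny].
  by rewrite -Ey Ea sqL codom_f.
by case/existsP: (valP w); exists y; rewrite ny Ey eqxx.
Qed.

Lemma interm_in_codom_dE (e : ED b1 g) : val e \in codom (mE d).
Proof.
have [[y Ey]|[u <-]] := pushout_coverE b1V b1E POL (val e); last exact: codom_f.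
case: (boolP (y \in codom (mE b1))) => [/codomP [a Ea]|ny].
  by rewrite -Ey Ea sqLE codom_f.
by case/and3P: (valP e) => /existsP []; exists y; rewrite ny Ey eqxx.
Qed.

Definition interm_toV (w : VD b1 g) : gnode D := iinv (interm_in_codom_d w).
Definition interm_toE (e : ED b1 g) : gedge D := iinv (interm_in_codom_dE e).
Lemma interm_toVK w : mV d (interm_toV w) = val w. Proof. exact: f_iinv. Qed.
Lemma interm_toEK e : mE d (interm_toE e) = val e. Proof. exact: f_iinv. Qed.

Lemma interm_toV_kD a : interm_toV (kD b1 gV a) = mV k a.
Proof. by apply: dV; rewrite interm_toVK -sqL. Qed.

Lemma interm_toV_off w : (forall a, mV g (mV b1 a) <> val w) ->
  interm_toV w \notin codom (mV k).
Proof.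
by move=> offw; apply/codomP => -[a Ea]; apply: (offw a); rewrite sqL -Ea interm_toVK.
Qed.

Lemma interm_to_lab w : glab (interm_toV w) = labD w.
Proof.
case: (interm_nodeP w) => [a ->|offw].
  by rewrite interm_toV_kD labD_kD (pullback_lab_c PBL b1V (proj1 (TL _))).
by rewrite labD_off // -interm_toVK (pushout_lab_out b1V b1E POL (interm_toV_off offw)).
Qed.
Lemma interm_to_root w : groot (interm_toV w) = rootD w.
Proof.
case: (interm_nodeP w) => [a ->|offw].
  by rewrite interm_toV_kD rootD_kD (pullback_root_c PBL b1V (proj2 (TL _))).
by rewrite rootD_off // -interm_toVK (pushout_root_out b1V b1E POL (interm_toV_off offw)).
Qed.

Definition interm_to : morph (interm b1 g) D.
Proof.
refine (@Morph _ _ (interm b1 g) D interm_toV interm_toE _ _ _ _ _).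
- by move=> e; apply: dV; rewrite morph_src !interm_toVK interm_toEK.
- by move=> e; apply: dV; rewrite morph_tgt !interm_toVK interm_toEK.
- by move=> e; rewrite -(morph_mark d) interm_toEK.
- by move=> w a; rewrite interm_to_lab.
- by move=> w a; rewrite interm_to_root.
Defined.

Lemma interm_toV_inj : injective interm_toV.
Proof. by move=> w1 w2 E; apply/val_inj; rewrite -!interm_toVK E. Qed.
Lemma interm_toE_inj : injective interm_toE.
Proof. by move=> e1 e2 E; apply/val_inj; rewrite -!interm_toEK E. Qed.

Lemma interm_toV_d u : interm_toV (exist _ (mV d u) (d_kept u)) = u.
Proof. by apply: dV; rewrite interm_toVK. Qed.
Lemma interm_toE_d e : interm_toE (exist _ (mE d e) (d_keptE e)) = e.
Proof. by apply: dE; rewrite interm_toEK. Qed.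

Lemma interm_iso : iso (interm b1 g) D.
Proof.
apply: (@bij_morph_iso _ _ _ _ interm_to interm_toV_inj interm_toE_inj).
- by move=> u; rewrite -(interm_toV_d u) codom_f.
- by move=> e; rewrite -(interm_toE_d e) codom_f.
- exact: interm_to_lab.
- exact: interm_to_root.
Qed.

Lemma h_lab x : glab (mV h x) = glab x.
Proof. by case Lx: (glab x) (proj1 (TR x)) => [a|] // _; apply: morph_lab. Qed.
Lemma h_root x : groot (mV h x) = groot x.
Proof. by case Rx: (groot x) (proj2 (TR x)) => [a|] // _; apply: morph_root. Qed.

Definition result_toV (s : VH b1 b2 g) : gnode H :=
  match s with inl w => mV d' (interm_toV w) | inr x => mV h (val x) end.
Definition result_toE (s : EH b1 b2 g) : gedge H :=
  match s with inl e => mE d' (interm_toE e) | inr y => mE h (val y) end.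

Lemma result_toV_hR x : result_toV (hR b1 b2 gV x) = mV h x.
Proof.
case: (boolP (x \in codom (mV b2))) => [/codomP [a ->]|nx].
- by rewrite hR_b2 /= interm_toV_kD sqR.
- by rewrite (hR_out nx).
Qed.

Lemma result_to_lab (s : gnode (result b1 b2 gV)) : glab (result_toV s) = glab s.
Proof.
case: s => [w|x]; last exact: h_lab.
case: (interm_nodeP w) => [a ->|offw].
  by rewrite result_lab_kD /= interm_toV_kD -sqR h_lab.
rewrite result_lab_off //= (pushout_lab_out b2V b2E POR (interm_toV_off offw)).
by rewrite interm_to_lab labD_off.
Qed.
Lemma result_to_root (s : gnode (result b1 b2 gV)) : groot (result_toV s) = groot s.
Proof.
case: s => [w|x]; last exact: h_root.
case: (interm_nodeP w) => [a ->|offw].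
  by rewrite result_root_kD /= interm_toV_kD -sqR h_root.
rewrite result_root_off //= (pushout_root_out b2V b2E POR (interm_toV_off offw)).
by rewrite interm_to_root rootD_off.
Qed.

Definition result_to : morph (result b1 b2 gV) H.
Proof.
refine (@Morph _ _ (result b1 b2 gV) H result_toV result_toE _ _ _ _ _).
- case=> [e|y] /=; last by rewrite result_toV_hR morph_src.
  by rewrite -morph_src; congr (mV d' _); exact: (morph_src interm_to).
- case=> [e|y] /=; last by rewrite result_toV_hR morph_tgt.
  by rewrite -morph_tgt; congr (mV d' _); exact: (morph_tgt interm_to).
- case=> [e|y] /=; last exact: morph_mark.
  by rewrite morph_mark; exact: (morph_mark interm_to).
- by move=> s a; rewrite result_to_lab.
- by move=> s a; rewrite result_to_root.
Defined.

Lemma result_toV_inj : injective result_toV.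
Proof.
case=> [w1|x1] [w2|x2] /= E.
- by rewrite (interm_toV_inj (d'V E)).
- have [a Ea _] := pushout_pullbackV b2V b2E POR (esym E).
  by have := proj2_sig x2; rewrite -Ea codom_f.
- have [a Ea _] := pushout_pullbackV b2V b2E POR E.
  by have := proj2_sig x1; rewrite -Ea codom_f.
- by rewrite (val_inj (hV E)).
Qed.
Lemma result_toE_inj : injective result_toE.
Proof.
case=> [e1|y1] [e2|y2] /= E.
- by rewrite (interm_toE_inj (d'E E)).
- have [a Ea _] := pushout_pullbackE b2V b2E POR (esym E).
  by have := proj2_sig y2; rewrite -Ea codom_f.
- have [a Ea _] := pushout_pullbackE b2V b2E POR E.
  by have := proj2_sig y1; rewrite -Ea codom_f.
- by rewrite (val_inj (hE E)).
Qed.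

Lemma result_toV_onto z : z \in codom result_toV.
Proof.
have [[y <-]|[u <-]] := pushout_coverV b2V b2E POR z.
  case: (boolP (y \in codom (mV b2))) => [/codomP [a ->]|ny]; last first.
    by rewrite -[mV h y]/(result_toV (inr (exist _ y ny))) codom_f.
  by rewrite sqR -(interm_toV_d (mV k a)) -[mV d' _]/(result_toV (inl _)) codom_f.
by rewrite -(interm_toV_d u) -[mV d' _]/(result_toV (inl _)) codom_f.
Qed.
Lemma result_toE_onto z : z \in codom result_toE.
Proof.
have [[y <-]|[u <-]] := pushout_coverE b2V b2E POR z.
  case: (boolP (y \in codom (mE b2))) => [/codomP [a ->]|ny]; last first.
    by rewrite -[mE h y]/(result_toE (inr (exist _ y ny))) codom_f.
  by rewrite sqRE -(interm_toE_d (mE k a)) -[mE d' _]/(result_toE (inl _)) codom_f.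
by rewrite -(interm_toE_d u) -[mE d' _]/(result_toE (inl _)) codom_f.
Qed.

Lemma result_iso : iso (result b1 b2 gV) H.
Proof.
exact: (bij_morph_iso (f := result_to) result_toV_inj result_toE_inj
  result_toV_onto result_toE_onto result_to_lab result_to_root).
Qed.

End GivenDPO.

Section Construction.
Hypothesis dang : dangling b1 g.

Lemma kept_b1E a : keepE b1 g (mE g (mE b1 a)).
Proof.
rewrite /keepE -!morph_src -!morph_tgt !(keep_K b1 gV) !andbT.
by apply/existsP => -[y /andP [ny /eqP /gE Ey]]; rewrite Ey codom_f in ny.
Qed.

Definition kDE a : ED b1 g := exist _ (mE g (mE b1 a)) (kept_b1E a).

Lemma kept_off_g w : w \notin codom (mV g) -> ~~ delV b1 g w.
Proof. by move=> nw; apply/existsP => -[x /andP [_ /eqP Ex]]; rewrite -Ex codom_f in nw. Qed.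

Lemma kept_off_gE e : e \notin codom (mE g) -> keepE b1 g e.
Proof.
move=> ne; apply/and3P; split.
- by apply/existsP => -[y /andP [_ /eqP Ey]]; rewrite -Ey codom_f in ne.
- by apply/existsP => -[x /andP [nx /eqP Ex]]; have [/(_ (esym Ex))] := dang ne nx.
- by apply/existsP => -[x /andP [nx /eqP Ex]]; have [_ /(_ (esym Ex))] := dang ne nx.
Qed.

Definition k_interm : morph K (interm b1 g).
Proof.
refine (@Morph _ _ K (interm b1 g) (kD b1 gV) kDE _ _ _ _ _).
- by move=> e; apply/val_inj; rewrite /= !morph_src.
- by move=> e; apply/val_inj; rewrite /= !morph_tgt.
- by move=> e; rewrite /= /markD /= !morph_mark.
- by move=> a c; rewrite /= labD_kD.
- by move=> a c; rewrite /= rootD_kD.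
Defined.

Definition d_interm : morph (interm b1 g) G.
Proof.
refine (@Morph _ _ (interm b1 g) G val val _ _ _ _ _) => //.
- by move=> w c; rewrite /= /labD; case: ifP.
- by move=> w c; rewrite /= /rootD; case: ifP.
Defined.

Definition d_result : morph (interm b1 g) (result b1 b2 gV).
Proof.
refine (@Morph _ _ (interm b1 g) (result b1 b2 gV) inl inl _ _ _ _ _) => //.
- move=> w c; change (labD w = Some c -> glab (inl w : gnode (result b1 b2 gV)) = Some c).
  case: (interm_nodeP w) => [a ->|offw]; last by rewrite result_lab_off // labD_off.
  by rewrite result_lab_kD labD_kD; apply: morph_lab.
- move=> w c; change (rootD w = Some c -> groot (inl w : gnode (result b1 b2 gV)) = Some c).
  case: (interm_nodeP w) => [a ->|offw]; last by rewrite result_root_off // rootD_off.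
  by rewrite result_root_kD rootD_kD; apply: morph_root.
Defined.

Definition hRE (y : gedge R) : EH b1 b2 g :=
  codom_case (mE b2) y (fun a => inl (kDE a)) (fun ny => inr (exist _ y ny)).

Lemma hRE_b2 a : hRE (mE b2 a) = inl (kDE a). Proof. exact: codom_case_f. Qed.
Lemma hRE_out y (ny : y \notin codom (mE b2)) : hRE y = inr (exist _ y ny : ERn b2).
Proof. exact: codom_case_out. Qed.

Definition h_result : morph R (result b1 b2 gV).
Proof.
refine (@Morph _ _ R (result b1 b2 gV) (hR b1 b2 gV) hRE _ _ _ _ _).
- move=> e; case: (boolP (e \in codom (mE b2))) => [/codomP [a ->]|ny].
    by rewrite hRE_b2 -morph_src hR_b2; congr inl; apply/val_inj; rewrite /= !morph_src.
  by rewrite (hRE_out ny).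
- move=> e; case: (boolP (e \in codom (mE b2))) => [/codomP [a ->]|ny].
    by rewrite hRE_b2 -morph_tgt hR_b2; congr inl; apply/val_inj; rewrite /= !morph_tgt.
  by rewrite (hRE_out ny).
- move=> e; case: (boolP (e \in codom (mE b2))) => [/codomP [a ->]|ny].
    by rewrite hRE_b2 /= /markD /= !morph_mark.
  by rewrite (hRE_out ny).
- move=> x c; case: (boolP (x \in codom (mV b2))) => [/codomP [a ->]|nx].
    by rewrite hR_b2 result_lab_kD.
  by rewrite (hR_out nx).
- move=> x c; case: (boolP (x \in codom (mV b2))) => [/codomP [a ->]|nx].
    by rewrite hR_b2 result_root_kD.
  by rewrite (hR_out nx).
Defined.

Section LeftMediator.
Variables (X : graph) (x1 : morph L X) (x2 : morph (interm b1 g) X).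
Hypothesis sq : sq_comm b1 k_interm x1 x2.

Definition medLV (w : gnode G) : gnode X :=
  codom_case (mV g) w (mV x1) (fun nw => mV x2 (exist _ w (kept_off_g nw))).
Definition medLE (e : gedge G) : gedge X :=
  codom_case (mE g) e (mE x1) (fun ne => mE x2 (exist _ e (kept_off_gE ne))).

Lemma medLV_g x : medLV (mV g x) = mV x1 x. Proof. exact: codom_case_f. Qed.
Lemma medLE_g y : medLE (mE g y) = mE x1 y. Proof. exact: codom_case_f. Qed.

Lemma medLV_kept w (p : ~~ delV b1 g w) : medLV w = mV x2 (exist _ w p).
Proof.
case: (boolP (w \in codom (mV g))) => [/codomP [y Ey]|nw]; last first.
  by rewrite /medLV codom_case_out; congr (mV x2 _); apply/val_inj.
case: (boolP (y \in codom (mV b1))) => [/codomP [a Ea]|ny]; last first.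
  by case/existsP: p; exists y; rewrite ny Ey eqxx.
by rewrite {1}Ey medLV_g Ea (proj1 sq); congr (mV x2 _); apply/val_inj; rewrite /= Ey Ea.
Qed.

Lemma medLE_kept e (p : keepE b1 g e) : medLE e = mE x2 (exist _ e p).
Proof.
case: (boolP (e \in codom (mE g))) => [/codomP [y Ey]|ne]; last first.
  by rewrite /medLE codom_case_out; congr (mE x2 _); apply/val_inj.
case: (boolP (y \in codom (mE b1))) => [/codomP [a Ea]|ny]; last first.
  by have /and3P [/existsP []] := p; exists y; rewrite ny Ey eqxx.
by rewrite {1}Ey medLE_g Ea (proj2 sq); congr (mE x2 _); apply/val_inj; rewrite /= Ey Ea.
Qed.

Definition medL : morph G X.
Proof.
refine (@Morph _ _ G X medLV medLE _ _ _ _ _).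
- move=> e; case: (boolP (e \in codom (mE g))) => [/codomP [y ->]|/kept_off_gE p].
    by rewrite medLE_g -morph_src medLV_g morph_src.
  rewrite (medLE_kept p) -morph_src (medLV_kept (keepE_src p)).
  by congr (mV x2 _); apply/val_inj.
- move=> e; case: (boolP (e \in codom (mE g))) => [/codomP [y ->]|/kept_off_gE p].
    by rewrite medLE_g -morph_tgt medLV_g morph_tgt.
  rewrite (medLE_kept p) -morph_tgt (medLV_kept (keepE_tgt p)).
  by congr (mV x2 _); apply/val_inj.
- move=> e; case: (boolP (e \in codom (mE g))) => [/codomP [y ->]|/kept_off_gE p].
    by rewrite medLE_g !morph_mark.
  by rewrite (medLE_kept p) morph_mark.
- move=> w c; case: (boolP (w \in codom (mV g))) => [/codomP [x ->]|nw].
    by rewrite g_lab medLV_g; apply: morph_lab.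
  rewrite (medLV_kept (kept_off_g nw)) => Lw; apply: morph_lab.
  by rewrite /= labD_off // => a /= Ea; move: nw; rewrite -Ea codom_f.
- move=> w c; case: (boolP (w \in codom (mV g))) => [/codomP [x ->]|nw].
    by rewrite g_root medLV_g; apply: morph_root.
  rewrite (medLV_kept (kept_off_g nw)) => Rw; apply: morph_root.
  by rewrite /= rootD_off // => a /= Ea; move: nw; rewrite -Ea codom_f.
Defined.

Lemma medL_unique (u : morph G X) :
  tri u g x1 -> tri u d_interm x2 -> meq medL u.
Proof.
move=> [ugV ugE] [udV udE]; split=> [w|e] /=.
- case: (boolP (w \in codom (mV g))) => [/codomP [x ->]|/kept_off_g p].
    by rewrite medLV_g ugV.
  by rewrite (medLV_kept p) -udV.
- case: (boolP (e \in codom (mE g))) => [/codomP [y ->]|/kept_off_gE p].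
    by rewrite medLE_g ugE.
  by rewrite (medLE_kept p) -udE.
Qed.

End LeftMediator.

Lemma interm_pushout : is_pushout b1 k_interm g d_interm.
Proof.
split=> // X x1 x2 sq; exists (medL sq); split; last exact: medL_unique.
split; split=> /=.
- exact: medLV_g.
- exact: medLE_g.
- by case=> w p; rewrite medLV_kept.
- by case=> e p; rewrite medLE_kept.
Qed.

Lemma interm_kD_lab (X : graph) (y : morph X (interm b1 g)) (p : gnode X -> gnode K) :
  (forall z, mV y z = kD b1 gV (p z)) ->
  forall z c, glab z = Some c -> glab (p z) = Some c.
Proof. by move=> yp z c /(morph_lab y); rewrite yp /= labD_kD. Qed.
Lemma interm_kD_root (X : graph) (y : morph X (interm b1 g)) (p : gnode X -> gnode K) :
  (forall z, mV y z = kD b1 gV (p z)) ->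
  forall z c, groot z = Some c -> groot (p z) = Some c.
Proof. by move=> yp z c /(morph_root y); rewrite yp /= rootD_kD. Qed.

Lemma interm_pullback : is_pullback b1 k_interm g d_interm.
Proof.
apply: pullback_of_injective => //; try exact: val_inj.
move=> X y1 y2 [sqV sqE].
have y1V z : mV y1 z \in codom (mV b1).
  apply: contraT => nz; case/existsP: (valP (mV y2 z)).
  by exists (mV y1 z); rewrite nz sqV eqxx.
have y1E z : mE y1 z \in codom (mE b1).
  apply: contraT => nz; have /and3P [kept _ _] := valP (mE y2 z); case/existsP: kept.
  by exists (mE y1 z); rewrite nz sqE eqxx.
have y2_kD z : mV y2 z = kD b1 gV (factorV y1V z).
  by apply: val_inj; rewrite /= factorVK sqV.
exists (factor_morph b1V y1E (interm_kD_lab y2_kD) (interm_kD_root y2_kD)).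
exact: factor_morphK.
Qed.

Section RightMediator.
Variables (X : graph) (x1 : morph R X) (x2 : morph (interm b1 g) X).
Hypothesis sq : sq_comm b2 k_interm x1 x2.

Definition medRV (s : VH b1 b2 g) : gnode X :=
  match s with inl w => mV x2 w | inr x => mV x1 (val x) end.
Definition medRE (s : EH b1 b2 g) : gedge X :=
  match s with inl e => mE x2 e | inr y => mE x1 (val y) end.

Lemma medRV_hR x : medRV (hR b1 b2 gV x) = mV x1 x.
Proof.
case: (boolP (x \in codom (mV b2))) => [/codomP [a ->]|nx].
- by rewrite hR_b2 /= (proj1 sq).
- by rewrite (hR_out nx).
Qed.
Lemma medRE_hRE y : medRE (hRE y) = mE x1 y.
Proof.
case: (boolP (y \in codom (mE b2))) => [/codomP [a ->]|ny].
- by rewrite hRE_b2 /= (proj2 sq).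
- by rewrite (hRE_out ny).
Qed.

Definition medR : morph (result b1 b2 gV) X.
Proof.
refine (@Morph _ _ (result b1 b2 gV) X medRV medRE _ _ _ _ _).
- by case=> [e|y] /=; rewrite ?medRV_hR morph_src.
- by case=> [e|y] /=; rewrite ?medRV_hR morph_tgt.
- by case=> [e|y] /=; rewrite morph_mark.
- case=> [w|x] c; last exact: (morph_lab x1).
  case: (interm_nodeP w) => [a ->|offw]; last first.
    by rewrite result_lab_off // -labD_off //; exact: (morph_lab x2).
  by rewrite result_lab_kD /= -(proj1 sq); exact: (morph_lab x1).
- case=> [w|x] c; last exact: (morph_root x1).
  case: (interm_nodeP w) => [a ->|offw]; last first.
    by rewrite result_root_off // -rootD_off //; exact: (morph_root x2).
  by rewrite result_root_kD /= -(proj1 sq); exact: (morph_root x1).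
Defined.

Lemma medR_unique (u : morph (result b1 b2 gV) X) :
  tri u h_result x1 -> tri u d_result x2 -> meq medR u.
Proof.
move=> [uhV uhE] [udV udE]; split=> -[w|x] /=; rewrite ?udV ?udE //.
- have <- : hR b1 b2 gV (val x) = inr x.
    by rewrite (hR_out (valP x)); congr inr; apply: val_inj.
  by rewrite -uhV.
- have <- : hRE (val x) = inr x.
    by rewrite (hRE_out (valP x)); congr inr; apply: val_inj.
  by rewrite -uhE.
Qed.

End RightMediator.

Lemma result_sq_comm : sq_comm b2 k_interm h_result d_result.
Proof. by split=> a /=; rewrite ?hR_b2 ?hRE_b2. Qed.

Lemma result_pushout : is_pushout b2 k_interm h_result d_result.
Proof.
split; first exact: result_sq_comm.
move=> X x1 x2 sq; exists (medR sq); split; last exact: medR_unique.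
by split; split=> z /=; rewrite ?medRV_hR ?medRE_hRE.
Qed.

Lemma result_pullback : is_pullback b2 k_interm h_result d_result.
Proof.
apply: pullback_of_injective result_sq_comm _ => //.
- by move=> w1 w2 [].
- by move=> e1 e2 [].
move=> X y1 y2 [sqV sqE].
have y1V z : mV y1 z \in codom (mV b2).
  by apply: contraT => nz; have := sqV z; rewrite [mV h_result _]/= (hR_out nz).
have y1E z : mE y1 z \in codom (mE b2).
  by apply: contraT => nz; have := sqE z; rewrite [mE h_result _]/= (hRE_out nz).
have y2_kD z : mV y2 z = kD b1 gV (factorV y1V z).
  have := sqV z; rewrite -(factorVK y1V z).
  by rewrite [mV h_result _]/= hR_b2 => -[].
exists (factor_morph b2V y1E (interm_kD_lab y2_kD) (interm_kD_root y2_kD)).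
exact: factor_morphK.
Qed.

Lemma construction_natural_dpo :
  natural_dpo b1 b2 g k_interm d_interm h_result d_result.
Proof.
split; split.
- exact: interm_pushout.
- exact: interm_pullback.
- exact: result_pushout.
- exact: result_pullback.
Qed.

End Construction.

Lemma TLRG_result : TLRG G <-> TLRG (result b1 b2 gV).
Proof.
split=> [TG [w|x]|TH w]; last 2 first.
- exact: TR.
- case: (boolP (w \in codom (mV g))) => [/codomP [x ->]|nw].
    by rewrite g_lab g_root; apply: TL.
  have offw a : mV g (mV b1 a) <> val (exist _ w (kept_off_g nw) : VD b1 g).
    by move=> /= Ea; move: nw; rewrite -Ea codom_f.
  by have := TH (inl (exist _ w (kept_off_g nw))); rewrite result_lab_off // result_root_off.
case: (interm_nodeP w) => [a ->|offw].
  by rewrite result_lab_kD result_root_kD; apply: TR.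
by rewrite result_lab_off // result_root_off //; apply: TG.
Qed.

End RuleApplication.

Theorem theorem3p1 (LV LE : finType) (K L R : graph LV LE)
  (b1 : morph K L) (b2 : morph K R) (Hrule : is_rule b1 b2)
  (G : graph LV LE) (g : morph L G) (ginj : inj_morph g) :
  ((exists (D H : graph LV LE) (k : morph K D) (d : morph D G)
           (h : morph R H) (d' : morph D H),
      natural_dpo b1 b2 g k d h d') <-> dangling b1 g)
  /\
  (dangling b1 g ->
   forall (D H : graph LV LE) (k : morph K D) (d : morph D G)
          (h : morph R H) (d' : morph D H)
          (D2 H2 : graph LV LE) (k2 : morph K D2) (e2 : morph D2 G)
          (h2 : morph R H2) (e2' : morph D2 H2),
     natural_dpo b1 b2 g k d h d' -> natural_dpo b1 b2 g k2 e2 h2 e2' ->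
     iso D D2 /\ iso H H2)
  /\
  (dangling b1 g -> TLRG G ->
   forall (D H : graph LV LE) (k : morph K D) (d : morph D G)
          (h : morph R H) (d' : morph D H),
     natural_dpo b1 b2 g k d h d' ->
     iso D (interm b1 g) /\ iso H (result b1 b2 (proj1 ginj)))
  /\
  (forall (D H : graph LV LE) (k : morph K D) (d : morph D G)
          (h : morph R H) (d' : morph D H),
     natural_dpo b1 b2 g k d h d' -> (TLRG G <-> TLRG H)).
Proof.
have [TL [TR [[b1V b1E] [b2V b2E]]]] := Hrule.
pose gV := proj1 ginj; pose gE := proj2 ginj.
split; [split|split; [|split]].
- by case=> D [H [k [d [h [d' dpo]]]]]; exact (natural_dpo_dangling b1V b1E dpo).
- move=> dang; do 6 eexists.
  exact: construction_natural_dpo TL b1V b1E b2V b2E gV gE dang.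
- move=> _ D H k d h d' D2 H2 k2 d2 h2 d2' dpo dpo2; split.
  + exact: iso_trans (iso_sym (interm_iso TL b1V b1E gV dpo))
      (interm_iso TL b1V b1E gV dpo2).
  + exact: iso_trans (iso_sym (result_iso TL TR b1V b1E b2V b2E gV gE dpo))
      (result_iso TL TR b1V b1E b2V b2E gV gE dpo2).
- move=> _ _ D H k d h d' dpo; split.
  + exact: iso_sym (interm_iso TL b1V b1E gV dpo).
  + exact: iso_sym (result_iso TL TR b1V b1E b2V b2E gV gE dpo).
- move=> D H k d h d' dpo.
  have isoRH := result_iso TL TR b1V b1E b2V b2E gV gE dpo.
  have [to_result of_result] := TLRG_result b2 TL TR b1V gV.
  by split=> [/to_result/(iso_TLRG isoRH)|/(iso_TLRG (iso_sym isoRH))/of_result].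
Qed.
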